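(* Restriction along the inclusion $\mathcal{S}_q\hookrightarrow\mathrm{Sp}(\mathcal{E}_q^{deg})$ induces an equivalence of categories $\mathcal{F}_{iso}\simeq\mathrm{Func}(\mathcal{S}_q,\mathcal{E})$.
   Context: $\mathcal{E}$ is the category of all $\mathbb{F}_2$-vector spaces. $\mathcal{E}_q^{deg}$: objects finite-dimensional quadratic spaces over $\mathbb{F}_2$ (possibly degenerate), morphisms injective linear maps preserving the forms; it has pullbacks. $\mathrm{Sp}(\mathcal{E}_q^{deg})$: same objects; morphisms are spans $[V\leftarrow D\rightarrow W]$ up to isomorphism of $D$, composed by pullback. $\mathcal{F}_{iso}=\mathrm{Func}(\mathrm{Sp}(\mathcal{E}_q^{deg}),\mathcal{E})$. $\mathcal{S}_q$ is the full subcategory of $\mathrm{Sp}(\mathcal{E}_q^{deg})$ whose objects are the non-degenerate quadratic spaces (those whose polar bilinear form $q(x+y)+q(x)+q(y)$ has trivial radical). *)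

From HB Require Import structures.
From mathcomp Require Import all_boot all_order all_algebra.
Unset Printing Implicit Defensive.
Import GRing.Theory.
Local Open Scope ring_scope.

Notation F2 := 'F_2.

Definition polar n (q : 'rV[F2]_n -> F2) (x y : 'rV[F2]_n) : F2 :=
  q (x + y) + q x + q y.
Arguments polar {n}.

(* q is a quadratic form: q(a x) = a^2 q(x) and its polar form is bilinear
   (bilinearity in the second variable follows from symmetry). *)
Definition is_quadratic n (q : 'rV[F2]_n -> F2) : Prop :=
  (forall (a : F2) x, q (a *: x) = a ^+ 2 * q x) /\
  (forall (a : F2) x y z, polar q (a *: x + y) z = a * polar q x z + polar q y z).
Arguments is_quadratic {n}.

Record qspace := QSpace {
  qdim : nat;
  qform : 'rV[F2]_qdim -> F2;
  qformP : is_quadratic qform }.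

Definition nondeg (V : qspace) : Prop :=
  forall x : 'rV[F2]_(qdim V), (forall y, polar (qform V) x y = 0) -> x = 0.

(* morphisms of E_q^deg: injective linear maps x |-> x *m M preserving forms *)
Record qmor (V W : qspace) := QMor {
  qmx : 'M[F2]_(qdim V, qdim W);
  qmx_inj : forall x y : 'rV[F2]_(qdim V), x *m qmx = y *m qmx -> x = y;
  qmx_isom : forall x, qform W (x *m qmx) = qform V x }.
Arguments qmx {V W}.
Arguments QMor {V W}.

Lemma qid_inj (V : qspace) :
  forall x y : 'rV[F2]_(qdim V), x *m 1%:M = y *m 1%:M -> x = y.
Proof. by move=> x y; rewrite !mulmx1. Qed.

Lemma qid_isom (V : qspace) :
  forall x : 'rV[F2]_(qdim V), qform V (x *m 1%:M) = qform V x.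
Proof. by move=> x; rewrite mulmx1. Qed.

Definition qid (V : qspace) : qmor V V := QMor (1%:M) (@qid_inj V) (@qid_isom V).

Definition is_pullback {A B W P : qspace} (f : qmor A W) (g : qmor B W)
  (p : qmor P A) (p' : qmor P B) : Prop :=
  qmx p *m qmx f = qmx p' *m qmx g /\
  forall (Q : qspace) (a : qmor Q A) (b : qmor Q B),
    qmx a *m qmx f = qmx b *m qmx g ->
    exists u : qmor Q P,
      [/\ qmx u *m qmx p = qmx a, qmx u *m qmx p' = qmx b &
          forall u' : qmor Q P, qmx u' *m qmx p = qmx a ->
                     qmx u' *m qmx p' = qmx b -> qmx u' = qmx u].

Record span (V W : qspace) := Span {
  sapex : qspace;
  sleft : qmor sapex V;
  sright : qmor sapex W }.
Arguments sapex {V W}.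
Arguments sleft {V W}.
Arguments sright {V W}.
Arguments Span {V W}.

(* spans identified up to isomorphism of the apex *)
Definition span_equiv {V W : qspace} (s t : span V W) : Prop :=
  exists (phi : qmor (sapex s) (sapex t)) (psi : qmor (sapex t) (sapex s)),
    [/\ qmx phi *m qmx psi = 1%:M, qmx psi *m qmx phi = 1%:M,
        qmx phi *m qmx (sleft t) = qmx (sleft s) &
        qmx phi *m qmx (sright t) = qmx (sright s)].

Definition span_id (V : qspace) : span V V := Span V (qid V) (qid V).

(* u is (a representative of) the composite t o s, computed by pullback *)
Definition span_comp_of {U V W : qspace} (s : span U V) (t : span V W) (u : span U W) : Prop :=
  exists (p : qmor (sapex u) (sapex s)) (p' : qmor (sapex u) (sapex t)),
    [/\ is_pullback (sright s) (sleft t) p p',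
        qmx p *m qmx (sleft s) = qmx (sleft u) &
        qmx p' *m qmx (sright t) = qmx (sright u)].

Record qobj (P : qspace -> Prop) := QObj { qo :> qspace; qoP : P qo }.
Arguments qo {P}.
Arguments QObj P qo qoP.

Record qfunctor (P : qspace -> Prop) := QFunctor {
  fobj : qobj P -> lmodType F2;
  fmor : forall A B : qobj P, span A B -> fobj A -> fobj B;
  fmor_lin : forall (A B : qobj P) (s : span A B) (a : F2) x y,
      fmor A B s (a *: x + y) = a *: fmor A B s x + fmor A B s y;
  fmor_equiv : forall (A B : qobj P) (s t : span A B),
      span_equiv s t -> forall x, fmor A B s x = fmor A B t x;
  fmor_id : forall (A : qobj P) x, fmor A A (span_id A) x = x;
  fmor_comp : forall (A B C : qobj P) (s : span A B) (t : span B C) (u : span A C),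
      span_comp_of s t u -> forall x, fmor A C u x = fmor B C t (fmor A B s x) }.
Arguments fobj {P}.
Arguments fmor {P} q {A B}.
Arguments QFunctor P : clear implicits.

Record qnat P (F G : qfunctor P) := QNat {
  ncomp : forall A : qobj P, fobj F A -> fobj G A;
  ncomp_lin : forall (A : qobj P) (a : F2) x y,
      ncomp A (a *: x + y) = a *: ncomp A x + ncomp A y;
  ncomp_nat : forall (A B : qobj P) (s : span A B) x,
      ncomp B (fmor F s x) = fmor G s (ncomp A x) }.
Arguments qnat {P}.
Arguments ncomp {P F G}.
Arguments QNat {P} F G ncomp ncomp_lin ncomp_nat.

Definition qnat_iso {P} (F G : qfunctor P) : Prop :=
  exists (eta : qnat F G) (eps : qnat G F),
    (forall A x, ncomp eps A (ncomp eta A x) = x) /\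
    (forall A x, ncomp eta A (ncomp eps A x) = x).

(* F_iso = Func(Sp(E_q^deg), E) and Func(S_q, E) *)
Definition allq : qspace -> Prop := fun _ => True.
Definition Fiso := qfunctor allq.
Definition FuncSq := qfunctor nondeg.

Definition incl (A : qobj nondeg) : qobj allq := @QObj allq (qo A) I.

Definition res (F : Fiso) : FuncSq :=
  @QFunctor nondeg (fun A => fobj F (incl A))
    (fun A B s => @fmor _ F (incl A) (incl B) s)
    (fun A B s => @fmor_lin _ F (incl A) (incl B) s)
    (fun A B s t => @fmor_equiv _ F (incl A) (incl B) s t)
    (fun A => @fmor_id _ F (incl A))
    (fun A B C s t u => @fmor_comp _ F (incl A) (incl B) (incl C) s t u).

Definition res_nat {F G : Fiso} (eta : qnat F G) : qnat (res F) (res G) :=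
  @QNat _ (res F) (res G) (fun A => ncomp eta (incl A))
    (fun A => @ncomp_lin _ F G eta (incl A))
    (fun A B s => @ncomp_nat _ F G eta (incl A) (incl B) s).

(* Every quadratic space V embeds isometrically into its hyperbolic hull
   H(V) = V + V^* with the form (x, xi) |-> q(x) + <x, xi>, which is
   non-degenerate.  The spans  sect V = [V <- V -> H(V)]  and
   retr V = [H(V) <- V -> V]  satisfy  retr V o sect V = id  and
   sect V o retr V = [H(V) <- V -> H(V)], an idempotent of H(V).  So every object
   of Sp(E_q^deg) is a retract of an object of S_q: restriction is faithful and
   full because natural transformations can be transported along these
   retractions, and a functor H on S_q extends by sending V to the fixed points
   of H applied to that idempotent, which is the Karoubi-envelope construction. *)
From Pilot Require Import Defs.
From HB Require Import structures.
From mathcomp Require Import all_boot all_order all_algebra.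
From mathcomp Require Import ring.
(* Re-imported so that [span] refers to Defs and not to mathcomp's vector spans. *)
Import Pilot.Defs.
Import GRing.Theory.
Local Open Scope ring_scope.

(* Spans are indexed by the underlying spaces [qo A], from which the objects
   [A : qobj P] cannot be inferred, so the objects are made explicit. *)
Arguments fmor {P} q A B.
Arguments fmor_lin {P} q A B s.
Arguments fmor_equiv {P} q A B {s t}.
Arguments fmor_id {P} q A.
Arguments fmor_comp {P} q A B C {s t u}.
Arguments ncomp_nat {P F G} q A B.

Lemma addrr_F2 (x : F2) : x + x = 0.
Proof. exact: addrr_pchar2 (pchar_Fp (isT : prime 2)) x. Qed.

Lemma qform0 n (q : 'rV[F2]_n -> F2) : is_quadratic q -> q 0 = 0.
Proof. by case=> qZ _; have := qZ 0 0; rewrite scale0r expr2 !mul0r. Qed.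

Lemma qmx_rcancel {V W : qspace} (f : qmor V W) k (M N : 'M[F2]_(k, qdim V)) :
  M *m qmx f = N *m qmx f -> M = N.
Proof.
by move=> eMN; apply/row_matrixP => i; apply: (@qmx_inj _ _ f); rewrite -!row_mul eMN.
Qed.

Section Composition.
Variables (U V W : qspace) (f : qmor U V) (g : qmor V W).

Lemma qcomp_inj (x y : 'rV[F2]_(qdim U)) :
  x *m (qmx f *m qmx g) = y *m (qmx f *m qmx g) -> x = y.
Proof. by rewrite !mulmxA => /(@qmx_inj _ _ g) /(@qmx_inj _ _ f). Qed.

Lemma qcomp_isom x : qform W (x *m (qmx f *m qmx g)) = qform U x.
Proof. by rewrite mulmxA !qmx_isom. Qed.

Definition qcomp : qmor U W := QMor (qmx f *m qmx g) qcomp_inj qcomp_isom.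

End Composition.
Arguments qcomp {U V W}.

Section Pullbacks.
Variables (D C W : qspace) (h : qmor D C) (g : qmor C W) (f : qmor D W).
Hypothesis f_factor : qmx f = qmx h *m qmx g.

(* Since g is a monomorphism, f = h g is pulled back along g to itself. *)
Lemma is_pullback_factor : is_pullback f g (qid D) h.
Proof.
split; first by rewrite /= mul1mx.
move=> Q a b eab; exists a; split => /=; first by rewrite mulmx1.
- by apply: (qmx_rcancel g); rewrite -mulmxA -f_factor.
- by move=> u'; rewrite mulmx1.
Qed.

Lemma is_pullback_factor_sym : is_pullback g f h (qid D).
Proof.
split; first by rewrite /= mul1mx.
move=> Q b a eab; exists a; split => /=; last by move=> u' _; rewrite mulmx1.
- by apply: (qmx_rcancel g); rewrite -mulmxA -f_factor.
- by rewrite mulmx1.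
Qed.

End Pullbacks.

Lemma is_pullback_comp {A B W W' P : qspace} (f : qmor A W) (g : qmor B W)
    (k : qmor W W') (p : qmor P A) (p' : qmor P B) :
  is_pullback f g p p' -> is_pullback (qcomp f k) (qcomp g k) p p'.
Proof.
case=> eq_pf univ; split; first by rewrite /= !mulmxA eq_pf.
by move=> Q a b eab; apply: univ; apply: (qmx_rcancel k); rewrite -!mulmxA.
Qed.

Section HyperbolicHull.
Variables (n : nat) (q : 'rV[F2]_n -> F2).

Local Notation "''[' x , y ]" := (form idfun 1%:M x y).

Lemma form1_delta_r (x : 'rV[F2]_n) i : '[x, delta_mx 0 i] = x 0 i.
Proof. by rewrite /form mulmx1 (map_mx_id (fun=> erefl)) trmx_delta -colE mxE. Qed.

Lemma form1_delta_l (x : 'rV[F2]_n) i : '[delta_mx 0 i, x] = x 0 i.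
Proof. by rewrite /form mulmx1 -rowE !mxE. Qed.

(* [z = row_mx x xi] models the pair (x, xi) in V + V^*. *)
Definition hform (z : 'rV[F2]_(n + n)) : F2 := q (lsubmx z) + '[lsubmx z, rsubmx z].

Lemma polar_hform u w :
  polar hform u w = polar q (lsubmx u) (lsubmx w) + '[lsubmx u, rsubmx w]
                    + '[lsubmx w, rsubmx u].
Proof.
rewrite /polar /hform !linearD /= formDl !formDr.
set a := '[_, _]; set b := '[_, _]; set c := '[_, _]; set d := '[_, _].
set q1 := q _; set q2 := q _; set q3 := q _.
have -> : q1 + (a + b + (c + d)) + (q2 + a) + (q3 + d) =
          q1 + q2 + q3 + b + c + (a + a) + (d + d) by ring.
by rewrite !addrr_F2 !addr0.
Qed.

Hypothesis q_quad : is_quadratic q.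

Lemma hform_quadratic : is_quadratic hform.
Proof.
have [qZ qpolar] := q_quad; split.
  by move=> a x; rewrite /hform !linearZ /= qZ formZl formZr expr2 mulrDr !mulrA.
move=> a x y z; rewrite !polar_hform !linearD !linearZ /= qpolar.
by rewrite !formDl !formDr !formZl !formZr /=; ring.
Qed.

Lemma hform_nondeg (x : 'rV[F2]_(n + n)) : (forall y, polar hform x y = 0) -> x = 0.
Proof.
move=> x_rad.
have xl0 : lsubmx x = 0.
  apply/rowP => i; have := x_rad (row_mx 0 (delta_mx 0 i)).
  rewrite polar_hform row_mxKl row_mxKr form1_delta_r form0l /polar !addr0.
  by rewrite addrr_F2 qform0 // !add0r => ->; rewrite mxE.
have xr0 : rsubmx x = 0.
  apply/rowP => i; have := x_rad (row_mx (delta_mx 0 i) 0).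
  rewrite polar_hform row_mxKl row_mxKr form0r xl0 form1_delta_l /polar add0r.
  by rewrite qform0 // !addr0 addrr_F2 add0r => ->; rewrite mxE.
by rewrite -[x]hsubmxK xl0 xr0 row_mx0.
Qed.

End HyperbolicHull.
Arguments hform {n}.
Arguments hform_quadratic {n q}.
Arguments hform_nondeg {n q}.

Definition hull (V : qspace) : qspace :=
  QSpace (qdim V + qdim V) (hform (qform V)) (hform_quadratic (qformP V)).

Lemma hull_nondeg (V : qspace) : nondeg (hull V).
Proof. exact: hform_nondeg (qformP V). Qed.

Definition Hobj (V : qspace) : qobj nondeg := QObj nondeg (hull V) (hull_nondeg V).

Section HullInclusion.
Variable V : qspace.
Let j : 'M[F2]_(qdim V, qdim (hull V)) := row_mx 1%:M 0.

Lemma hull_in_inj (x y : 'rV[F2]_(qdim V)) : x *m j = y *m j -> x = y.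
Proof. by rewrite !mul_mx_row !mulmx1 !mulmx0 => /eq_row_mx []. Qed.

Lemma hull_in_isom x : qform (hull V) (x *m j) = qform V x.
Proof. by rewrite /= /hform mul_mx_row mulmx1 mulmx0 row_mxKl row_mxKr form0r addr0. Qed.

Definition hull_in : qmor V (hull V) := QMor j hull_in_inj hull_in_isom.

End HullInclusion.

Definition sect (V : qspace) : span V (hull V) := Span V (qid V) (hull_in V).
Definition retr (V : qspace) : span (hull V) V := Span V (hull_in V) (qid V).
Definition hull_span {V W : qspace} (s : span V W) : span (hull V) (hull W) :=
  Span (sapex s) (qcomp (sleft s) (hull_in V)) (qcomp (sright s) (hull_in W)).
Definition hull_span_l {V W : qspace} (s : span V W) : span (hull V) W :=
  Span (sapex s) (qcomp (sleft s) (hull_in V)) (sright s).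
Definition hull_span_r {V W : qspace} (s : span V W) : span V (hull W) :=
  Span (sapex s) (sleft s) (qcomp (sright s) (hull_in W)).
Definition hull_idem (V : qspace) : span (hull V) (hull V) := hull_span (span_id V).

Lemma comp_sect_retr V : span_comp_of (sect V) (retr V) (span_id V).
Proof.
exists (qid V), (qid V); split => /=; rewrite ?mulmx1 //.
by apply: is_pullback_factor; rewrite /= mul1mx.
Qed.

Lemma comp_retr_sect V : span_comp_of (retr V) (sect V) (hull_idem V).
Proof.
exists (qid V), (qid V); split => //.
by apply: is_pullback_factor; rewrite /= mul1mx.
Qed.

Lemma comp_sect_idem V : span_comp_of (sect V) (hull_idem V) (sect V).
Proof.
exists (qid V), (qid V); split => /=; rewrite ?mulmx1 ?mul1mx //.
by apply: is_pullback_factor; rewrite /= !mul1mx.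
Qed.

Lemma comp_hull_span_idem {V W} (s : span V W) :
  span_comp_of (hull_span s) (hull_idem W) (hull_span s).
Proof.
exists (qid _), (sright s); split => /=; rewrite ?mul1mx //.
by apply: is_pullback_factor; rewrite /= mul1mx.
Qed.

Lemma comp_hull_span {U V W} {s : span U V} {t : span V W} {u : span U W} :
  span_comp_of s t u -> span_comp_of (hull_span s) (hull_span t) (hull_span u).
Proof.
case=> p [p' [pb el er]]; exists p, p'; split => /=.
- exact: is_pullback_comp.
- by rewrite mulmxA el.
- by rewrite mulmxA er.
Qed.

Lemma comp_hull_span_retr {V W} (s : span V W) :
  span_comp_of (hull_span s) (retr W) (hull_span_l s).
Proof.
exists (qid _), (sright s); split => /=; rewrite ?mul1mx ?mulmx1 //.
exact: is_pullback_factor.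
Qed.

Lemma comp_retr_span {V W} (s : span V W) : span_comp_of (retr V) s (hull_span_l s).
Proof.
exists (sleft s), (qid _); split => //=; last by rewrite mul1mx.
by apply: is_pullback_factor_sym; rewrite /= mulmx1.
Qed.

Lemma comp_span_sect {V W} (s : span V W) : span_comp_of s (sect W) (hull_span_r s).
Proof.
exists (qid _), (sright s); split => /=; rewrite ?mul1mx //.
by apply: is_pullback_factor; rewrite /= mulmx1.
Qed.

Lemma comp_sect_hull_span {V W} (s : span V W) :
  span_comp_of (sect V) (hull_span s) (hull_span_r s).
Proof.
exists (sleft s), (qid _); split => /=; rewrite ?mulmx1 ?mul1mx //.
exact: is_pullback_factor_sym.
Qed.

Lemma hull_span_equiv {V W} {s t : span V W} :
  span_equiv s t -> span_equiv (hull_span s) (hull_span t).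
Proof.
case=> phi [psi [phiK psiK el er]]; exists phi, psi; split => //=.
- by rewrite mulmxA el.
- by rewrite mulmxA er.
Qed.

Section HullRetract.
Variables (P : qspace -> Prop) (F : qfunctor P) (A B : qobj P).
Variables (hA : P (hull A)) (hB : P (hull B)).
Let HA := QObj P (hull A) hA.
Let HB := QObj P (hull B) hB.

Lemma fmor_sectK : cancel (fmor F A HA (sect A)) (fmor F HA A (retr A)).
Proof.
by move=> x; rewrite -(fmor_comp F A HA A (comp_sect_retr A)) (fmor_id F A).
Qed.

Lemma fmor_sect_nat (s : span A B) x :
  fmor F B HB (sect B) (fmor F A B s x) =
  fmor F HA HB (hull_span s) (fmor F A HA (sect A) x).
Proof.
rewrite -(fmor_comp F A B HB (comp_span_sect s)).
by rewrite -(fmor_comp F A HA HB (comp_sect_hull_span s)).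
Qed.

Lemma fmor_retr_nat (s : span A B) y :
  fmor F HB B (retr B) (fmor F HA HB (hull_span s) y) =
  fmor F A B s (fmor F HA A (retr A) y).
Proof.
rewrite -(fmor_comp F HA HB B (comp_hull_span_retr s)).
by rewrite -(fmor_comp F HA A B (comp_retr_span s)).
Qed.

End HullRetract.
Arguments fmor_sectK {P} F A hA.
Arguments fmor_sect_nat {P} F A B hA hB.
Arguments fmor_retr_nat {P} F A B hA hB.

Definition fixed_pred {R : pzRingType} {M : lmodType R} {e : M -> M}
  (e_lin : linear e) : {pred M} := [pred x | e x == x].

Lemma fixed_pred_submod_closed {R : pzRingType} {M : lmodType R} {e : M -> M}
  (e_lin : linear e) : submod_closed (fixed_pred e_lin).
Proof.
have e0 : e 0 = 0.
  by apply: (@addrI _ (e 0)); rewrite addr0 -{1}[e 0]scale1r -e_lin scale1r addr0.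
split; first by rewrite inE /= e0.
by move=> a x y /eqP ex /eqP ey; rewrite inE /= e_lin ex ey.
Qed.

HB.instance Definition _ R M e e_lin :=
  GRing.isSubmodClosed.Build R M (@fixed_pred R M e e_lin)
    (fixed_pred_submod_closed e_lin).

Definition fixed_submod {R : pzRingType} {M : lmodType R} {e : M -> M}
  (e_lin : linear e) := {x : M | x \in fixed_pred e_lin}.

HB.instance Definition _ R M e e_lin := [isSub of @fixed_submod R M e e_lin for sval].
HB.instance Definition _ R M e e_lin := [Choice of @fixed_submod R M e e_lin by <:].
HB.instance Definition _ R M e e_lin :=
  [SubChoice_isSubLmodule of @fixed_submod R M e e_lin by <:].

Section Extension.
Variable H : FuncSq.

Definition ext_obj (V : qspace) :=
  fixed_submod (fmor_lin H (Hobj V) (Hobj V) (hull_idem V)).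

Lemma hull_span_fixed {V W : qspace} (s : span V W) y :
  fmor H (Hobj V) (Hobj W) (hull_span s) y
    \in fixed_pred (fmor_lin H (Hobj W) (Hobj W) (hull_idem W)).
Proof.
by rewrite inE /= -(fmor_comp H (Hobj V) (Hobj W) (Hobj W) (comp_hull_span_idem s)).
Qed.

Definition ext_mor {V W : qspace} (s : span V W) (x : ext_obj V) : ext_obj W :=
  Sub (fmor H (Hobj V) (Hobj W) (hull_span s) (val x)) (hull_span_fixed s (val x)).

Lemma ext_mor_lin (A B : qobj allq) (s : span A B) (a : F2) (x y : ext_obj A) :
  ext_mor s (a *: x + y) = a *: ext_mor s x + ext_mor s y.
Proof. by apply: val_inj; exact: fmor_lin. Qed.

Lemma ext_mor_equiv (A B : qobj allq) (s t : span A B) :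
  span_equiv s t -> forall x, ext_mor s x = ext_mor t x.
Proof.
move=> st x; apply: val_inj.
exact: (fmor_equiv H (Hobj A) (Hobj B) (hull_span_equiv st) (val x)).
Qed.

Lemma ext_mor_id (A : qobj allq) (x : ext_obj A) : ext_mor (span_id A) x = x.
Proof. by apply: val_inj; apply/eqP; exact: (valP x). Qed.

Lemma ext_mor_comp (A B C : qobj allq) (s : span A B) (t : span B C) (u : span A C) :
  span_comp_of s t u -> forall x, ext_mor u x = ext_mor t (ext_mor s x).
Proof.
move=> stu x; apply: val_inj.
exact: (fmor_comp H (Hobj A) (Hobj B) (Hobj C) (comp_hull_span stu) (val x)).
Qed.

Definition extension : Fiso :=
  QFunctor allq ext_obj (fun A B s => @ext_mor A B s)
    ext_mor_lin ext_mor_equiv ext_mor_id ext_mor_comp.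

End Extension.

Section Fullness.
Variables (F G : Fiso) (theta : qnat (res F) (res G)).

Definition lift_comp (A : qobj allq) (x : fobj F A) : fobj G A :=
  fmor G (incl (Hobj A)) A (retr A)
    (ncomp theta (Hobj A) (fmor F A (incl (Hobj A)) (sect A) x)).

Lemma lift_comp_lin (A : qobj allq) (a : F2) x y :
  lift_comp A (a *: x + y) = a *: lift_comp A x + lift_comp A y.
Proof. by rewrite /lift_comp !fmor_lin ncomp_lin fmor_lin. Qed.

Lemma lift_comp_nat (A B : qobj allq) (s : span A B) x :
  lift_comp B (fmor F A B s x) = fmor G A B s (lift_comp A x).
Proof.
rewrite /lift_comp (fmor_sect_nat F A B I I s x).
by rewrite (ncomp_nat theta (Hobj A) (Hobj B) (hull_span s)) (fmor_retr_nat G A B I I).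
Qed.

Definition lift_nat : qnat F G := QNat F G lift_comp lift_comp_lin lift_comp_nat.

Lemma res_lift_nat (A : qobj nondeg) x : ncomp (res_nat lift_nat) A x = ncomp theta A x.
Proof.
apply: etrans (esym (ncomp_nat theta (Hobj A) A (retr A) _)) _.
by rewrite /= (fmor_sectK F (incl A) I).
Qed.

End Fullness.
Arguments lift_nat {F G}.

Section EssentialImage.
Variable H : FuncSq.

Definition ext_retr (A : qobj nondeg) (x : fobj (res (extension H)) A) : fobj H A :=
  fmor H (Hobj A) A (retr A) (val x).

Lemma ext_retr_lin (A : qobj nondeg) (a : F2) x y :
  ext_retr A (a *: x + y) = a *: ext_retr A x + ext_retr A y.
Proof. by rewrite /ext_retr -fmor_lin. Qed.

Lemma ext_retr_nat (A B : qobj nondeg) (s : span A B) x :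
  ext_retr B (fmor (res (extension H)) A B s x) = fmor H A B s (ext_retr A x).
Proof. exact: (fmor_retr_nat H A B (hull_nondeg A) (hull_nondeg B)). Qed.

Lemma sect_fixed {A : qobj nondeg} (y : fobj H A) :
  fmor H A (Hobj A) (sect A) y
    \in fixed_pred (fmor_lin H (Hobj A) (Hobj A) (hull_idem A)).
Proof. by rewrite inE /= -(fmor_comp H A (Hobj A) (Hobj A) (comp_sect_idem A)). Qed.

Definition ext_sect (A : qobj nondeg) (y : fobj H A) : fobj (res (extension H)) A :=
  Sub (fmor H A (Hobj A) (sect A) y) (sect_fixed y).

Lemma ext_sect_lin (A : qobj nondeg) (a : F2) x y :
  ext_sect A (a *: x + y) = a *: ext_sect A x + ext_sect A y.
Proof. by apply: val_inj; rewrite /= fmor_lin. Qed.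

Lemma ext_sect_nat (A B : qobj nondeg) (s : span A B) y :
  ext_sect B (fmor H A B s y) = fmor (res (extension H)) A B s (ext_sect A y).
Proof.
by apply: val_inj; exact: (fmor_sect_nat H A B (hull_nondeg A) (hull_nondeg B)).
Qed.

Lemma res_extension_iso : qnat_iso (res (extension H)) H.
Proof.
exists (QNat _ _ ext_retr ext_retr_lin ext_retr_nat).
exists (QNat _ _ ext_sect ext_sect_lin ext_sect_nat).
split=> A x /=; last exact: (fmor_sectK H A (hull_nondeg A)).
apply: val_inj; rewrite /= /ext_retr.
rewrite -(fmor_comp H (Hobj A) A (Hobj A) (comp_retr_sect A)).
by apply/eqP; exact: (valP x).
Qed.

End EssentialImage.

Lemma res_faithful (F G : Fiso) (eta eta' : qnat F G) :
  (forall A x, ncomp (res_nat eta) A x = ncomp (res_nat eta') A x) ->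
  forall A x, ncomp eta A x = ncomp eta' A x.
Proof.
move=> eq_res A x; rewrite -(fmor_sectK F A I x).
rewrite (ncomp_nat eta (incl (Hobj A)) A) (ncomp_nat eta' (incl (Hobj A)) A).
by congr (fmor _ _ _ _ _); exact: (eq_res (Hobj A)).
Qed.

Theorem theorem4p13 :
  [/\ (* faithful *)
      (forall (F G : Fiso) (eta eta' : qnat F G),
          (forall A x, ncomp (res_nat eta) A x = ncomp (res_nat eta') A x) ->
          forall A x, ncomp eta A x = ncomp eta' A x),
      (* full *)
      (forall (F G : Fiso) (theta : qnat (res F) (res G)),
          exists eta : qnat F G,
            forall A x, ncomp (res_nat eta) A x = ncomp theta A x) &
      (* essentially surjective *)
      (forall H : FuncSq, exists F : Fiso, qnat_iso (res F) H)].
Proof.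
split.
- exact: res_faithful.
- by move=> F G theta; exists (lift_nat theta); exact: res_lift_nat.
- by move=> H; exists (extension H); exact: res_extension_iso.
Qed.
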